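(* Let $p$ be an odd prime, $r\ge3$ with $p\nmid r$, let $V_1=\mathbb{Z}_p^{d_1}$, $V_2=\mathbb{Z}_p^{d_2}$, and let $G=(V_1\times V_2)\rtimes_{(\psi_1,\psi_2)}\mathrm{D}_{2r}$, where $\psi_i:\mathrm{D}_{2r}\to\mathrm{GL}(V_i)$ is irreducible over $\mathbb{F}_p$ for $i=1,2$. If $G$ has a rotary pair $(\rho,\tau)$ with $|\rho|=2p$ and $|\tau|=2$, then $\psi_1\not\cong\psi_2$.
   Context: A rotary pair of $G$ is $(\rho,\tau)\in G\times G$ with $G=\langle\rho,\tau\rangle$ and $|\tau|=2$. $(V_1\times V_2)\rtimes_{(\psi_1,\psi_2)}\mathrm{D}_{2r}$ is the semidirect product in which $\mathrm{D}_{2r}$ acts on $V_i=\mathbb{F}_p^{d_i}$ via $\psi_i$ componentwise. *)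

From HB Require Import structures.
From mathcomp Require Import all_boot all_order all_algebra all_fingroup all_solvable all_field all_character.
Set Implicit Arguments. Unset Strict Implicit. Unset Printing Implicit Defensive.
Import GRing.Theory.
Local Open Scope group_scope.

(* The group  (V1 x V2) ><|_(psi1,psi2) D  with V_i = 'rV[F]_(n_i) and
   D acting on V_i through the (row-vector) representation psi_i. *)
Variant sdp2 (F : finFieldType) (gT : finGroupType) (n1 n2 : nat)
    (psi1 : mx_representation F [set: gT]%G n1)
    (psi2 : mx_representation F [set: gT]%G n2) : predArgType :=
  SDP2 of ('rV[F]_n1 * 'rV[F]_n2 * gT).
Arguments sdp2 {F gT n1 n2} psi1 psi2.
Arguments SDP2 {F gT n1 n2 psi1 psi2}.

Section SemiDirect.
Variables (F : finFieldType) (gT : finGroupType) (n1 n2 : nat).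
Variables (psi1 : mx_representation F [set: gT]%G n1)
          (psi2 : mx_representation F [set: gT]%G n2).

Local Notation sdp2 := (sdp2 psi1 psi2).
Definition sdp2_val (u : sdp2) := let: SDP2 x := u in x.
HB.instance Definition _ := [isNew for sdp2_val].
HB.instance Definition _ := [Finite of sdp2 by <:].

Local Notation "u `1" := (sdp2_val u).1.1 (at level 2).
Local Notation "u `2" := (sdp2_val u).1.2 (at level 2).
Local Notation "u `3" := (sdp2_val u).2 (at level 2).

(* (v, g) * (w, h) = (v psi(h) + w, g h) ; (0,g)^-1 (v,1) (0,g) = (v psi(g), 1) *)
Definition sdp2_mul (u w : sdp2) : sdp2 :=
  SDP2 (((u`1 *m psi1 w`3) + w`1)%R, ((u`2 *m psi2 w`3) + w`2)%R, u`3 * w`3).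
Definition sdp2_one : sdp2 := SDP2 (0%R, 0%R, 1).
Definition sdp2_inv (u : sdp2) : sdp2 :=
  SDP2 ((- (u`1 *m psi1 ((u`3)^-1)%g))%R, (- (u`2 *m psi2 ((u`3)^-1)%g))%R, (u`3)^-1).

Lemma sdp2_mulgA : associative sdp2_mul.
Proof.
case=> [[[a1 a2] x]] [[[b1 b2] y]] [[[c1 c2] z]]; rewrite /sdp2_mul /=.
by rewrite !repr_mxM ?inE // !mulmxDl !mulmxA !addrA mulgA.
Qed.

Lemma sdp2_mul1g : left_id sdp2_one sdp2_mul.
Proof.
by case=> [[[a1 a2] x]]; rewrite /sdp2_mul /= !mul0mx !add0r mul1g.
Qed.

Lemma sdp2_mulVg : left_inverse sdp2_one sdp2_inv sdp2_mul.
Proof.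
case=> [[[a1 a2] x]]; rewrite /sdp2_mul /sdp2_inv /sdp2_one /=.
by rewrite !mulNmx -!mulmxA -!repr_mxM ?inE // mulVg !repr_mx1 !mulmx1 !addNr.
Qed.

HB.instance Definition _ := Finite_isGroup.Build sdp2
  sdp2_mulgA sdp2_mul1g sdp2_mulVg.
End SemiDirect.

Definition rotary_pair (gT : finGroupType) (rho tau : gT) : Prop :=
  <<[set rho; tau]>> = [set: gT] /\ #[tau] = 2%N.

From HB Require Import structures.
From mathcomp Require Import all_boot all_order all_algebra all_fingroup all_solvable all_field all_character.
From mathcomp Require Import ring.
Set Implicit Arguments. Unset Strict Implicit. Unset Printing Implicit Defensive.
Import GRing.Theory.

(* The projections s, t of rho, tau to D_2r generate it, t is an involution and
   s^(2p) = 1; since p does not divide r, s is not a rotation, so s and t are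
   reflections and (st)^r = 1.  If psi1 and psi2 were both isomorphic to psi on V,
   every pair (A1, A2) of D-endomorphisms of V would give a homomorphism
   (x, y, g) |-> (x A1 + y A2, g) from G to V ><| D.  We pick (A1, A2) <> 0 sending
   rho and tau, hence all of G, into one conjugate of the complement D; then
   A1 = A2 = 0, a contradiction.  Finding (A1, A2) is linear algebra in an
   irreducible representation of a dihedral group in characteristic <> 2: the
   s-fixed vectors form a line over End_D(V); and either 1 - psi(st) is invertible,
   in which case every vector negated by s is y - y psi(s) with y fixed by t, or V
   is one-dimensional. *)
Local Open Scope group_scope.

Lemma gen2_closed (gT : finGroupType) (s t : gT) (X : {set gT}) :
  <<[set s; t]>> = [set: gT] -> 1 \in X -> {in X &, forall x y, x * y \in X} ->
  s \in X -> t \in X -> forall g, g \in X.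
Proof.
move=> gen_st X1 XM Xs Xt g; have gX : group_set X by apply/group_setP.
have : <<[set s; t]>> \subset Group gX by rewrite gen_subG subUset !sub1set Xs Xt.
by rewrite gen_st => /subsetP->.
Qed.

Lemma commute_gen2_abelian (gT : finGroupType) (s t : gT) :
  commute s t -> abelian <<[set s; t]>>.
Proof.
move=> cst; rewrite abelian_gen; apply/centsP.
by move=> u /set2P[]-> v /set2P[]->; rewrite // commute_sym.
Qed.

Lemma involutionV (gT : finGroupType) (u : gT) : u ^+ 2 = 1 -> u^-1 = u.
Proof. by move=> u2; apply/eqP; rewrite eq_invg_mul -[u * u]/(u ^+ 2) u2. Qed.

Lemma conj_involutions_mul (gT : finGroupType) (s t : gT) :
  s ^+ 2 = 1 -> t ^+ 2 = 1 -> (s * t) ^ s = (s * t)^-1.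
Proof.
move=> s2 t2; rewrite /conjg invMg !involutionV //.
by rewrite !mulgA -[s * s]/(s ^+ 2) s2 mul1g.
Qed.

Section DihedralPresentation.
Variables (gT : finGroupType) (r : nat) (x y : gT).
Hypotheses (genD : <[x]> <*> <[y]> = [set: gT]) (xr : x ^+ r = 1) (y2 : y ^+ 2 = 1).
Hypothesis xy : x ^ y = x^-1.
Local Notation X := <[x]>.

Lemma rot_or_refl g : g \in X \/ exists2 a, a \in X & g = a * y.
Proof.
have nXy : <[y]> \subset 'N(X) by rewrite norms_cycle xy groupV cycle_id.
have /mulsgP[a _ Xa /cycleP[k ->] ->] : g \in X * <[y]>.
  by rewrite -norm_joinEr // genD inE.
rewrite -(expg_mod k y2); have : k %% 2 < 2 by rewrite ltn_pmod.
by case: (k %% 2) => [|[|//]] _; [left; rewrite mulg1 | right; exists a].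
Qed.

Lemma rot_expr a : a \in X -> a ^+ r = 1.
Proof. by case/cycleP=> i ->; rewrite -expgM mulnC expgM xr expg1n. Qed.

Lemma rot_conj_refl a : a \in X -> a ^ y = a^-1.
Proof. by case/cycleP=> i ->; rewrite conjXg xy expgVn. Qed.

Lemma refl_mul a b : b \in X -> (a * y) * (b * y) = a * b^-1.
Proof.
by move=> Xb; rewrite -rot_conj_refl // conjgE (involutionV y2) !mulgA.
Qed.

Lemma rot_involution_central a g : a \in X -> a ^+ 2 = 1 -> commute a g.
Proof.
move=> Xa a2; have cXa b : b \in X -> commute a b.
  by case/cycleP: Xa => i -> /cycleP[j ->]; apply: commuteX2.
have cay : commute a y.
  by rewrite /commute conjgC rot_conj_refl // involutionV.
by case: (rot_or_refl g) => [/cXa // | [b /cXa cab ->]]; apply: commuteM.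
Qed.

End DihedralPresentation.

Lemma dihedral_presentation r : 1 < r ->
  exists x y : 'D_(r.*2),
    [/\ <[x]> <*> <[y]> = [set: 'D_(r.*2)], x ^+ r = 1, y ^+ 2 = 1 & x ^ y = x^-1].
Proof.
move=> r_gt1; case/existsP: (isoGrp_hom (Grp_dihedral r_gt1)) => -[x y] /= /eqP[].
by exists x, y.
Qed.

Lemma dihedral_nonabelian r : 2 < r -> ~~ abelian [set: 'D_(r.*2)].
Proof.
move=> r_gt2; apply/negP => cDD.
have [x [y [genD _ y2 xy]]] := dihedral_presentation (ltnW r_gt2).
have x2 : x ^+ 2 = 1.
  have cxy : commute x y by apply: (centsP cDD); rewrite inE.
  by apply/eqP; rewrite -[x ^+ 2]/(x * x) -eq_invg_mul -xy conjgE cxy mulKg.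
have ord_le2 (u : 'D_(r.*2)) : u ^+ 2 = 1 -> #|<[u]>| <= 2.
  by move=> u2; rewrite -orderE dvdn_leq // order_dvdn u2.
have : #|[set: 'D_(r.*2)]| <= 4.
  rewrite -genD cent_joinEr ?(sub_abelian_cent2 cDD) ?subsetT //.
  rewrite cardMg_divn (leq_trans (leq_div _ _)) //.
  exact: leq_mul (ord_le2 x x2) (ord_le2 y y2).
rewrite card_dihedral ?(ltnW r_gt2) // -addnn leqNgt.
by rewrite (leq_trans _ (leq_add r_gt2 r_gt2)).
Qed.

Lemma dihedral_gen_reflections r m (s t : 'D_(r.*2)) :
    2 < r -> coprime m r -> <<[set s; t]>> = [set: 'D_(r.*2)] ->
  t ^+ 2 = 1 -> s ^+ m.*2 = 1 -> s ^+ 2 = 1 /\ (s * t) ^+ r = 1.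
Proof.
move=> r_gt2 co_mr gen_st t2 s2m.
have [x [y [genD xr y2 xy]]] := dihedral_presentation (ltnW r_gt2).
have ncst : ~ commute s t.
  by move/commute_gen2_abelian; rewrite gen_st; apply/negP/dihedral_nonabelian.
have central := rot_involution_central genD y2 xy.
case: (rot_or_refl genD y2 xy s) => [Xs | [a Xa ->]].
  case: ncst; apply: central => //; apply/eqP; rewrite -order_dvdn.
  have dvd_sr : #[s] %| r by rewrite order_dvdn (rot_expr xr Xs).
  rewrite -(@Gauss_dvdr _ m) ?(coprime_dvdl dvd_sr) 1?coprime_sym //.
  by rewrite muln2 order_dvdn s2m.
case: (rot_or_refl genD y2 xy t) => [Xt | [b Xb ->]].
  by case: ncst; apply/commute_sym/central.
split; first by rewrite -[_ ^+ 2]/(_ * _) (refl_mul y2 xy) ?mulgV.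
by rewrite (refl_mul y2 xy) // (rot_expr xr) // groupM ?groupV.
Qed.

Local Close Scope group_scope.
Local Open Scope ring_scope.

Lemma repr_mxMT (F : fieldType) (gT : finGroupType) n
    (rG : mx_representation F [set: gT] n) (x y : gT) :
  rG (x * y)%g = rG x *m rG y.
Proof. by rewrite repr_mxM ?inE. Qed.

Lemma mx_irr_row_full (F : fieldType) (gT : finGroupType) (G : {group gT}) n
    (rG : mx_representation F G n) m (U : 'M_(m, n)) :
  mx_irreducible rG -> mxmodule rG U -> U != 0 -> row_full U.
Proof.
case/mx_irrP=> _ irrG modU nzU; have := irrG <<U>>%MS.
by rewrite (eqmx_module _ (genmxE U)) (eqmx_eq0 (genmxE U)) /row_full mxrank_gen; apply.
Qed.

Lemma centgmx_scalar (F : fieldType) (gT : finGroupType) (G : {group gT}) n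
    (rG : mx_representation F G n) a :
  centgmx rG a%:M.
Proof. by apply/centgmxP => g _; rewrite scalar_mxC. Qed.

Lemma centgmx_commute (F : fieldType) (gT : finGroupType) n
    (rG : mx_representation F [set: gT] n) A g m (u : 'M_(m, n)) :
  centgmx rG A -> u *m A *m rG g = u *m rG g *m A.
Proof. by move/centgmxP=> cA; rewrite -!mulmxA cA ?inE. Qed.

Section GeneratedGroup.
Variables (F : fieldType) (gT : finGroupType) (n : nat).
Variables (rG : mx_representation F [set: gT] n) (s t : gT).
Hypothesis gen_st : <<[set s; t]>>%g = [set: gT].

Lemma centgmx_gen2 A : comm_mx A (rG s) -> comm_mx A (rG t) -> centgmx rG A.
Proof.
move=> cAs cAt; suff: (<<[set s; t]>> \subset rcent rG A)%g by rewrite gen_st.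
by rewrite gen_subG subUset !sub1set !inE cAs cAt !eqxx.
Qed.

Lemma mxmodule_gen2 m (U : 'M_(m, n)) :
  (U *m rG s <= U)%MS -> (U *m rG t <= U)%MS -> mxmodule rG U.
Proof.
move=> sUs sUt; suff: (<<[set s; t]>> \subset rstabs rG U)%g by rewrite gen_st.
by rewrite gen_subG subUset !sub1set !inE sUs sUt.
Qed.

End GeneratedGroup.

Lemma antifixed_involutions_boundary (F : fieldType) n (P Q : 'M[F]_n) (x : 'rV_n) :
    P *m P = 1%:M -> Q *m Q = 1%:M -> 1%:M - P *m Q \in unitmx -> x *m P = - x ->
  exists2 y, y *m Q = y & x = y - y *m P.
Proof.
(* [A + B = (1 - PQ)(1 - QP)] is invertible and commutes with [P], and
   [y0 (1 + Q)(1 - P) = y0 (A + B)] whenever [y0 P = - y0]. *)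
move=> PP QQ uA xP; set A := 1%:M - P *m Q; pose B := 1%:M - Q *m P.
have PA : P *m A = B *m P.
  by rewrite mulmxBr mulmxBl mulmx1 mul1mx mulmxA PP mul1mx -mulmxA PP mulmx1.
have PB : P *m B = A *m P by rewrite mulmxBr mulmxBl mulmx1 mul1mx mulmxA.
have SP : comm_mx (A + B) P.
  by rewrite /comm_mx mulmxDl mulmxDr PA PB addrC.
have uS : A + B \in unitmx.
  have -> : A + B = A *m B.
    rewrite {2}/A mulmxBl mul1mx /B !mulmxBr !mulmx1 !mulmxA -(mulmxA P) QQ mulmx1 PP.
    by rewrite opprB addrC.
  have uB : B \in unitmx.
    have [uP _] := mulmx1_unit PP.
    by rewrite -[B]mulmx1 -PP mulmxA -PA unitmx_mul uP unitmx_mul uP uA.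
  by rewrite unitmx_mul uA uB.
have SiP : comm_mx (invmx (A + B)) P.
  rewrite /comm_mx -[invmx _ *m P]mulmx1 -(mulmxV uS) mulmxA -(mulmxA _ P) -SP.
  by rewrite mulmxA mulVmx // mul1mx.
pose y0 := x *m invmx (A + B).
have y0P : y0 *m P = - y0 by rewrite /y0 -mulmxA SiP mulmxA xP mulNmx.
have -> : x = y0 *m (A + B) by rewrite /y0 mulmxKV.
exists (y0 + y0 *m Q); first by rewrite mulmxDl -mulmxA QQ mulmx1 addrC.
rewrite mulmxDr /A /B !mulmxBr !mulmx1 !mulmxA y0P mulNmx !mulmxDl y0P.
by rewrite opprD !opprK.
Qed.

Lemma rV_le1_dependent (F : fieldType) n (u1 u2 : 'rV[F]_n) : (n <= 1)%N ->
  exists a1 a2 : F, (a1 != 0) || (a2 != 0) /\ a1 *: u1 + a2 *: u2 = 0.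
Proof.
move=> n_le1; have [-> | nz_u1] := eqVneq u1 0.
  by exists 1, 0; rewrite oner_eq0 scaler0 scale0r addr0.
have /sub_rVP[a ->] : (u2 <= u1)%MS.
  by apply/submx_full; rewrite /row_full eqn_leq rank_leq_col rank_rV nz_u1.
by exists a, (-1); rewrite oppr_eq0 oner_eq0 orbT scaleN1r addrN.
Qed.

Section DihedralRepresentation.
Variables (F : fieldType) (gT : finGroupType) (n r : nat).
Variables (psi : mx_representation F [set: gT] n) (s t : gT).
Hypothesis gen_st : <<[set s; t]>>%g = [set: gT].
Hypotheses (s2 : (s ^+ 2 = 1)%g) (t2 : (t ^+ 2 = 1)%g).
Hypotheses (r_gt0 : (0 < r)%N) (st_r : ((s * t) ^+ r = 1)%g).
Hypotheses (two_neq0 : 2%:R != 0 :> F) (irr : mx_irreducible psi).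
Local Notation c := (s * t)%g.

Lemma gen_refl_rot : <<[set s; c]>>%g = [set: gT].
Proof.
apply/eqP; rewrite eqEsubset subsetT -{1}gen_st gen_subG subUset !sub1set.
rewrite mem_gen ?set21 //= -[t in t \in _](mulKg s).
by rewrite groupM ?groupV ?mem_gen ?set21 ?set22.
Qed.

Lemma repr_involution g : (g ^+ 2 = 1)%g -> psi g *m psi g = 1%:M.
Proof. by move=> g2; rewrite -repr_mxMT -[(g * g)%g]/(g ^+ 2)%g g2 repr_mx1. Qed.

Lemma repr_refl_rot :
  psi s *m psi c = psi (c^-1)%g *m psi s /\ psi c *m psi s = psi s *m psi (c^-1)%g.
Proof.
have cs : (c ^ s = c^-1)%g by apply: conj_involutions_mul.
split; rewrite -!repr_mxMT; last by rewrite [in LHS]conjgC cs.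
by rewrite [in LHS]conjgCV (involutionV s2) cs.
Qed.

Lemma centgmx_symmetrize A :
  comm_mx A (psi c) -> centgmx psi (2%:R^-1 *: (A + psi s *m A *m psi s)).
Proof.
move=> cAc; have [sc cs] := repr_refl_rot; have ss := repr_involution s2.
set D := psi (c^-1)%g.
have cAD : comm_mx A D.
  have cD : psi c *m D = 1%:M by rewrite -repr_mxMT mulgV repr_mx1.
  have Dc : D *m psi c = 1%:M by rewrite -repr_mxMT mulVg repr_mx1.
  by rewrite /comm_mx -[D *m A]mulmx1 -cD !mulmxA -(mulmxA D A) cAc !mulmxA Dc mul1mx.
apply: (centgmx_gen2 gen_refl_rot); rewrite /comm_mx -!scalemxAl -!scalemxAr.
  congr (_ *: _); rewrite !(mulmxDl, mulmxDr) -(mulmxA _ (psi s) (psi s)) ss mulmx1.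
  by rewrite !mulmxA ss mul1mx addrC.
congr (_ *: _); rewrite !(mulmxDl, mulmxDr) cAc; congr (_ + _).
by rewrite -!mulmxA sc (mulmxA A) cAD -mulmxA (mulmxA (psi s)) -cs !mulmxA.
Qed.

Lemma fixed_centgmx_transitive (e f : 'rV[F]_n) :
  e *m psi s = e -> f *m psi s = f -> e != 0 -> exists2 A, centgmx psi A & e *m A = f.
Proof.
(* As [e] is [s]-fixed, the rows [e psi(c^k)] span a submodule, so [f = e M] with
   [M] commuting with [psi c]; averaging [M] over [s] gives the intertwiner. *)
move=> es fs nz_e; pose U := \matrix_(k < r) (e *m psi (c ^+ k)%g).
have sUk k : (e *m psi (c ^+ k)%g <= U)%MS.
  by rewrite -(expg_mod k st_r); have := row_sub (Ordinal (ltn_pmod k r_gt0)) U; rewrite rowK.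
have modU : mxmodule psi U.
  apply: (mxmodule_gen2 gen_refl_rot); apply/row_subP => k;
    rewrite row_mul rowK -mulmxA -repr_mxMT.
    have cV : (c^-1 = c ^+ r.-1)%g by apply/eqP; rewrite eq_invg_mul -expgS prednK ?st_r.
    by rewrite conjgC conjXg (conj_involutions_mul s2 t2) repr_mxMT mulmxA es cV -expgM.
  by rewrite -expgSr.
have nzU : U != 0.
  apply: contraNneq nz_e => U0.
  have := rowK (fun k : 'I_r => e *m psi (c ^+ k)%g) (Ordinal r_gt0).
  by rewrite -/U U0 row0 /= expg0 repr_mx1 mulmx1 => <-.
have /submxP[a def_f] : (f <= U)%MS.
  exact/submx_full/(mx_irr_row_full irr).
pose M := \sum_(k < r) a 0 k *: psi (c ^+ k)%g.
have {}def_f : f = e *m M.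
  by rewrite def_f mulmx_sum_row mulmx_sumr; apply: eq_bigr => k _; rewrite rowK scalemxAr.
have cMc : comm_mx M (psi c).
  rewrite /comm_mx mulmx_suml mulmx_sumr; apply: eq_bigr => k _.
  by rewrite -scalemxAl -scalemxAr -!repr_mxMT -expgSr expgS.
exists (2%:R^-1 *: (M + psi s *m M *m psi s)); first exact: centgmx_symmetrize.
rewrite -scalemxAr mulmxDr !mulmxA es -def_f fs.
by rewrite -mulr2n -scaler_nat scalerA mulVf // scale1r.
Qed.

Lemma fixed_pair_dependent (x1 x2 : 'rV_n) : x1 *m psi s = x1 -> x2 *m psi s = x2 ->
  exists A1 A2, [/\ centgmx psi A1, centgmx psi A2, (A1 != 0) || (A2 != 0)
                  & x1 *m A1 + x2 *m A2 = 0].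
Proof.
move=> x1s x2s; have nz1 : (1%:M : 'M[F]_n) != 0 by case: irr.
have [-> | nz_x1] := eqVneq x1 0.
  exists 1%:M, 0%:M; split; rewrite ?centgmx_scalar ?nz1 //.
  by rewrite mul0mx mul_mx_scalar scale0r addr0.
have [|A cA x1A] := @fixed_centgmx_transitive x1 (- x2) x1s _ nz_x1.
  by rewrite mulNmx x2s.
exists A, 1%:M; split; rewrite ?centgmx_scalar ?nz1 ?orbT //.
by rewrite x1A mulmx1 addNr.
Qed.

Lemma rot_fixed_dim_le1 : 1%:M - psi c \notin unitmx -> (n <= 1)%N.
Proof.
(* A nonzero [psi c]-fixed [f] gives the [s]-eigenvector [f + f psi(s)] or [f],
   which spans a submodule. *)
move=> nuC; have [sc _] := repr_refl_rot; have ss := repr_involution s2.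
have [f nz_f fc] : exists2 f : 'rV_n, f != 0 & f *m psi c = f.
  exists (nz_row (kermx (1%:M - psi c))); first by rewrite nz_row_eq0 kermx_eq0 row_free_unit.
  apply/eqP; rewrite eq_sym -subr_eq0 -{1}(mulmx1 (nz_row _)) -mulmxBr.
  exact/eqP/sub_kermxP/nz_row_sub.
have fsc : f *m psi s *m psi c = f *m psi s.
  have fD : f *m psi (c^-1)%g = f by rewrite -{1}fc -mulmxA -repr_mxMT mulgV repr_mx1 mulmx1.
  by rewrite -mulmxA sc mulmxA fD.
have [e nz_e [ec es]] : exists2 e : 'rV_n, e != 0 & e *m psi c = e /\ (e *m psi s <= e)%MS.
  have [fs0 | nz_e] := eqVneq (f + f *m psi s) 0.
    exists f => //; split => //.
    have /eqP-> : f *m psi s == - f by rewrite -addr_eq0 addrC fs0.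
    by rewrite -scaleN1r scalemx_sub.
  exists (f + f *m psi s) => //; split; first by rewrite mulmxDl fc fsc.
  by rewrite mulmxDl -mulmxA ss mulmx1 addrC.
have modE : mxmodule psi e by apply: (mxmodule_gen2 gen_refl_rot); rewrite ?ec.
by rewrite -(eqP (mx_irr_row_full irr modE nz_e)) rank_leq_row.
Qed.

Lemma dihedral_boundary_combination (u1 u2 : 'rV_n) :
  exists A1 A2, [/\ centgmx psi A1, centgmx psi A2, (A1 != 0) || (A2 != 0)
    & exists2 y, y *m psi t = y & u1 *m A1 + u2 *m A2 = y - y *m psi s].
Proof.
have nz1 : (1%:M : 'M[F]_n) != 0 by case: irr.
have [uC | /rot_fixed_dim_le1 n_le1] := boolP (1%:M - psi c \in unitmx); last first.
  have [a1 [a2 [nz_a a0]]] := rV_le1_dependent u1 u2 n_le1.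
  exists a1%:M, a2%:M; split; rewrite ?centgmx_scalar //.
    by rewrite -[a1%:M]scalemx1 -[a2%:M]scalemx1 !scalemx_eq0 (negPf nz1) !orbF.
  by exists 0; rewrite ?mul0mx // subr0 !mul_mx_scalar.
have fix_s (u : 'rV_n) : (u + u *m psi s) *m psi s = u + u *m psi s.
  by rewrite mulmxDl -mulmxA (repr_involution s2) mulmx1 addrC.
have [A1 [A2 [cA1 cA2 nzA kill]]] := fixed_pair_dependent (fix_s u1) (fix_s u2).
exists A1, A2; split => //.
apply: antifixed_involutions_boundary; rewrite ?repr_involution //.
  by rewrite -repr_mxMT.
apply/eqP; rewrite -addr_eq0 -kill !mulmxDl.
by rewrite !(centgmx_commute _ _ cA1) !(centgmx_commute _ _ cA2) addrC addrACA.
Qed.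

Lemma dihedral_coboundary (v1 v2 w1 w2 : 'rV_n) :
    w1 *m psi t = - w1 -> w2 *m psi t = - w2 ->
  exists A1 A2, [/\ centgmx psi A1, centgmx psi A2, (A1 != 0) || (A2 != 0)
    & exists z, v1 *m A1 + v2 *m A2 = z - z *m psi s
             /\ w1 *m A1 + w2 *m A2 = z - z *m psi t].
Proof.
(* [b := w1 A1 + w2 A2] is negated by [psi t], so [z := b / 2 + y] works as soon
   as [(v - (w - w psi(s)) / 2) A = y - y psi(s)] with [y] fixed by [psi t]. *)
move=> w1t w2t; pose u (v w : 'rV_n) := v - 2%:R^-1 *: (w - w *m psi s).
have [A1 [A2 [cA1 cA2 nzA [y yt yE]]]] := dihedral_boundary_combination (u v1 w1) (u v2 w2).
exists A1, A2; split => //; exists (2%:R^-1 *: (w1 *m A1 + w2 *m A2) + y); split.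
  rewrite mulmxDl opprD addrACA -yE /u -scalemxAl !mulmxDl !mulNmx -!scalemxAl !mulmxBl.
  rewrite (centgmx_commute _ _ cA1) (centgmx_commute _ _ cA2).
  move: (v1 *m A1) (v2 *m A2) (w1 *m A1) (w2 *m A2) (w1 *m psi s *m A1) (w2 *m psi s *m A2).
  by move=> a1 a2 b1 b2 c1 c2; apply/rowP => j; rewrite !mxE; move: (2%:R^-1 : F) => h; ring.
rewrite mulmxDl opprD addrACA yt subrr addr0 -scalemxAl mulmxDl.
rewrite (centgmx_commute _ _ cA1) (centgmx_commute _ _ cA2) w1t w2t !mulNmx -opprD.
by rewrite -scalerBr opprK -mulr2n -scaler_nat scalerA mulVf // scale1r.
Qed.

End DihedralRepresentation.

Section SemidirectProduct.
Variables (F : finFieldType) (gT : finGroupType) (n1 n2 : nat).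
Variables (psi1 : mx_representation F [set: gT] n1).
Variables (psi2 : mx_representation F [set: gT] n2).
Local Notation G := (sdp2 psi1 psi2).
Local Notation "u `1" := (sdp2_val u).1.1 (at level 2).
Local Notation "u `2" := (sdp2_val u).1.2 (at level 2).
Local Notation "u `3" := (sdp2_val u).2 (at level 2).

Lemma sdp2_valM (u w : G) :
  sdp2_val (u * w)%g = (u`1 *m psi1 w`3 + w`1, u`2 *m psi2 w`3 + w`2, (u`3 * w`3)%g).
Proof. by []. Qed.

Lemma sdp2_val1 : sdp2_val (1 : G)%g = (0, 0, 1%g).
Proof. by []. Qed.

Lemma sdp2_projX (u : G) k : (u ^+ k)%g`3 = (u`3 ^+ k)%g.
Proof. by elim: k => [|k IHk]; rewrite ?expg0 // !expgS sdp2_valM /= IHk. Qed.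

Lemma sdp2_gen_proj (rho tau : G) :
  <<[set rho; tau]>>%g = [set: G] -> <<[set rho`3; tau`3]>>%g = [set: gT].
Proof.
move=> gen_rt; apply/eqP; rewrite eqEsubset subsetT; apply/subsetP => g _.
pose X := [set u : G | u`3 \in <<[set rho`3; tau`3]>>%g].
have /(_ (SDP2 (0, 0, g))) : forall u, u \in X.
  apply: (gen2_closed gen_rt); rewrite ?inE ?group1 ?mem_gen ?set21 ?set22 //.
  by move=> u w; rewrite !inE sdp2_valM; apply: groupM.
by rewrite inE.
Qed.

Lemma sdp2_involution (u : G) : (u ^+ 2 = 1)%g ->
  [/\ (u`3 ^+ 2 = 1)%g, u`1 *m psi1 u`3 = - u`1 & u`2 *m psi2 u`3 = - u`2].
Proof.
move/(congr1 (fun w : G => sdp2_val w)); rewrite -[(u ^+ 2)%g]/(u * u)%g sdp2_valM sdp2_val1.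
by case=> /eqP; rewrite addr_eq0 => /eqP-> /eqP; rewrite addr_eq0 => /eqP-> u3.
Qed.

Lemma sdp2_coboundary_eq0 m (psi : mx_representation F [set: gT] m)
    (A1 : 'M_(n1, m)) (A2 : 'M_(n2, m)) (z : 'rV_m) (rho tau : G) :
    (forall g, psi1 g *m A1 = A1 *m psi g) -> (forall g, psi2 g *m A2 = A2 *m psi g) ->
    <<[set rho; tau]>>%g = [set: G] ->
    rho`1 *m A1 + rho`2 *m A2 = z - z *m psi rho`3 ->
    tau`1 *m A1 + tau`2 *m A2 = z - z *m psi tau`3 ->
  A1 = 0 /\ A2 = 0.
Proof.
move=> cA1 cA2 gen_rt Erho Etau.
(* The preimage of the conjugate by [z] of the complement, for the homomorphism
   [(x, y, g) |-> (x A1 + y A2, g)] to the semidirect product of [psi]. *)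
pose S := [set u : G | u`1 *m A1 + u`2 *m A2 == z - z *m psi u`3].
have S_N x y : SDP2 (x, y, 1%g) \in S.
  apply: (gen2_closed gen_rt); rewrite ?inE ?Erho ?Etau //.
    by rewrite sdp2_val1 !mul0mx addr0 repr_mx1 mulmx1 subrr.
  move=> u w; rewrite !inE sdp2_valM /= => /eqP Su /eqP Sw.
  rewrite !mulmxDl -!mulmxA cA1 cA2 !mulmxA addrACA -mulmxDl Su Sw repr_mxMT.
  by rewrite mulmxBl mulmxA addrC addrA subrK.
have vanish (x : 'rV_n1) (y : 'rV_n2) : x *m A1 + y *m A2 = 0.
  by have := S_N x y; rewrite inE /= repr_mx1 mulmx1 subrr => /eqP.
split; apply/row_matrixP => i; rewrite row0 rowE.
  by have := vanish (delta_mx 0 i) 0; rewrite mul0mx addr0.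
by have := vanish 0 (delta_mx 0 i); rewrite mul0mx add0r.
Qed.

Lemma sdp2_gen_involutions_not_rsim (rho tau : G) r :
    <<[set rho; tau]>>%g = [set: G] -> (tau ^+ 2 = 1)%g -> (rho`3 ^+ 2 = 1)%g ->
    (0 < r)%N -> ((rho`3 * tau`3) ^+ r = 1)%g ->
    2%:R != 0 :> F -> mx_irreducible psi1 ->
  ~ mx_rsim psi1 psi2.
Proof.
move=> gen_rt tau2 s2 r_gt0 st_r two_neq0 irr1 rsim12.
have def_n := mxrank_rsim rsim12; case/mx_rsim_sym: rsim12 => B _ freeB psiB.
have /row_fullP[B' B'B] : row_full B by rewrite /row_full (eqP freeB) def_n.
have [t2 w1t w2t] := sdp2_involution tau2.
have w2Bt : tau`2 *m B *m psi1 tau`3 = - (tau`2 *m B).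
  by rewrite -mulmxA -psiB ?inE // mulmxA w2t mulNmx.
have [A1 [A2 [cA1 cA2 nzA [z [Erho Etau]]]]] :=
  dihedral_coboundary (sdp2_gen_proj gen_rt) s2 t2 r_gt0 st_r two_neq0 irr1
    rho`1 (rho`2 *m B) w1t w2Bt.
have [A1_0 BA2_0] : A1 = 0 /\ B *m A2 = 0.
  apply: (sdp2_coboundary_eq0 (psi := psi1) (z := z) _ _ gen_rt); rewrite ?mulmxA //.
    by move=> g; apply/esym/centgmxP; rewrite ?inE.
  by move=> g; rewrite mulmxA psiB ?inE // -!mulmxA (centgmxP cA2) ?inE.
by move: nzA; rewrite A1_0 -[A2]mul1mx -B'B -mulmxA BA2_0 mulmx0 eqxx.
Qed.

End SemidirectProduct.

Lemma Fp_two_neq0 p : prime p -> odd p -> 2%:R != 0 :> 'F_p.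
Proof.
move=> pr_p odd_p; rewrite -(dvdn_pcharf (pchar_Fp pr_p)) (dvdn_prime2 pr_p) //.
by apply: contraL odd_p => /eqP->.
Qed.

Local Close Scope ring_scope.

Theorem lemma6p4 (p r d1 d2 : nat)
  (psi1 : mx_representation 'F_p [set: 'D_(r.*2)]%G d1)
  (psi2 : mx_representation 'F_p [set: 'D_(r.*2)]%G d2) :
  prime p -> odd p -> 3 <= r -> ~~ (p %| r) ->
  mx_irreducible psi1 -> mx_irreducible psi2 ->
  (exists rho tau : sdp2 psi1 psi2,
      rotary_pair rho tau /\ #[rho]%g = p.*2 /\ #[tau]%g = 2) ->
  ~ mx_rsim psi1 psi2.
Proof.
move=> pr_p odd_p r_ge3 p_ndvd_r irr1 _ [rho [tau [[gen_rt _] [o_rho o_tau]]]].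
have tau2 : (tau ^+ 2 = 1)%g by rewrite -o_tau expg_order.
have [t2 _ _] := sdp2_involution tau2.
have s2p : ((sdp2_val rho).2 ^+ p.*2 = 1)%g by rewrite -sdp2_projX -o_rho expg_order.
have co_pr : coprime p r by rewrite prime_coprime.
have [s2 st_r] := dihedral_gen_reflections r_ge3 co_pr (sdp2_gen_proj gen_rt) t2 s2p.
exact: sdp2_gen_involutions_not_rsim gen_rt tau2 s2 (ltnW (ltnW r_ge3)) st_r
  (Fp_two_neq0 pr_p odd_p) irr1.
Qed.
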